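(* Let $G$ be a finite solvable group with $G\in\mathcal{D}_n$ for some integer $n\ge 3$. Then the derived length of $G$ is at most $n-1$.
   Context: $\mathcal{D}(G)$ denotes the number of conjugacy classes of nontrivial subgroups $H$ of the finite group $G$ with $N_G(H)\neq H$; $\mathcal{D}_n$ is the family of finite groups $G$ with $\mathcal{D}(G)=n$. *)

From mathcomp Require Import all_boot all_fingroup all_solvable.
Set Implicit Arguments. Unset Strict Implicit. Unset Printing Implicit Defensive.
Local Open Scope group_scope.

Definition nonselfnorm_subgroups (gT : finGroupType) (G : {set gT}) : {set {set gT}} :=
  [set H : {set gT} | [&& group_set H, H \subset G, H != 1 & 'N_G(H) != H]].

Definition Dcount (gT : finGroupType) (G : {set gT}) : nat :=
  #|[set H :^: G | H in nonselfnorm_subgroups G]|.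

From mathcomp Require Import all_boot all_fingroup all_solvable zify.
Set Implicit Arguments. Unset Strict Implicit. Unset Printing Implicit Defensive.
Local Open Scope group_scope.

(* Let G^(k) be the last nontrivial term of the derived series. The terms
   G^(1), ..., G^(k) are distinct normal subgroups, so they give k conjugacy
   classes of non-self-normalizing subgroups. With L, M, A := G^(k-2), G^(k-1),
   G^(k) we find two more such subgroups, of different orders and distinct from
   every derived term, so D(G) >= k + 2. Let p be a prime divisor of |A|. They
   come from Sylow subgroups of M (Frattini argument), from proper subgroups of
   M or L when these are nilpotent, and from subgroups of the abelian group A.
   The delicate case is when M is a p-group whose only subgroup of order p is A:
   for p odd M is then cyclic, contradicting M' = A <> 1, while for p = 2 the
   subgroup A is central in G and L supplies the second subgroup. *)

Section NonSelfNormalizing.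
Variable gT : finGroupType.
Implicit Types A G H K M P X Y : {group gT}.

Lemma mem_nonselfnorm G H K :
  H \subset G -> H :!=: 1 -> K \subset G -> K \subset 'N(H) -> ~~ (K \subset H) ->
  (H : {set gT}) \in nonselfnorm_subgroups G.
Proof.
move=> sHG ntH sKG nHK not_sKH; rewrite inE groupP sHG ntH /=.
by apply: contra not_sKH => /eqP <-; rewrite subsetI sKG.
Qed.

Lemma nilpotent_proper_nonselfnorm G K H :
  nilpotent K -> K \subset G -> H \proper K -> H :!=: 1 ->
  (H : {set gT}) \in nonselfnorm_subgroups G.
Proof.
move=> nilK sKG prHK ntH; have := nilpotent_proper_norm nilK prHK.
rewrite properE => /andP[_ not_sNH].
apply: (mem_nonselfnorm (K := 'N_K(H))) => //.
- exact: subset_trans (proper_sub prHK) sKG.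
- exact: subset_trans (subsetIl _ _) sKG.
- exact: subsetIr.
Qed.

(* Frattini: G = K N_G(P), so N_G(P) = P <= K would force K = G. *)
Lemma Sylow_normal_nonselfnorm G K P q :
  K <| G -> K \proper G -> q.-Sylow(K) P -> P :!=: 1 ->
  (P : {set gT}) \in nonselfnorm_subgroups G.
Proof.
move=> nsKG prKG sylP ntP; have [sKG _] := andP nsKG; have sPK := pHall_sub sylP.
apply: (mem_nonselfnorm (K := 'N_G(P))) => //; rewrite ?subsetIl ?subsetIr //.
  exact: subset_trans sPK sKG.
apply: contraL prKG => sNP; rewrite properE negb_and negbK orbC.
by rewrite -{1}(Frattini_arg nsKG sylP) mul_subG // (subset_trans sNP sPK).
Qed.

Lemma mem_classes_eq G (H K : {set gT}) :
  H :^: G = K :^: G -> exists2 g, g \in G & H = K :^ g.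
Proof.
move=> eqHK; have: H \in K :^: G by rewrite -eqHK; apply/imsetP; exists 1; rewrite ?conjsg1.
by case/imsetP=> g; exists g.
Qed.

Lemma classes_eq_card G (H K : {set gT}) : H :^: G = K :^: G -> #|H| = #|K|.
Proof.
by case/mem_classes_eq=> g _ ->; rewrite cardJg.
Qed.

Lemma classes_eq_normal G (H K : {set gT}) :
  G \subset 'N(K) -> H :^: G = K :^: G -> H = K.
Proof.
by move=> nKG /mem_classes_eq[g Gg ->]; apply: (normsP nKG).
Qed.

Lemma pgroup_card_neq X Y (p q : nat) :
  p.-group X -> q.-group Y -> X :!=: 1 -> p != q -> #|X| != #|Y|.
Proof.
move=> pX qY ntX neq_pq; have [p_pr pX_dv _] := pgroup_pdiv pX ntX.
apply: contra neq_pq => /eqP eqXY.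
by have := pgroupP qY p p_pr; rewrite -eqXY inE => /(_ pX_dv).
Qed.

(* Conjugation maps G into the abelian group Aut A. *)
Lemma cyclic_normal_der1_cent G A : G \subset 'N(A) -> cyclic A -> G^`(1) \subset 'C(A).
Proof.
move=> nAG cycA; rewrite -ker_conj_aut ker_trivg_morphim (subset_trans (der_sub 1 G)) //=.
rewrite morphim_der //.
by move/derG1P: (abelianS (Aut_conj_aut A G) (Aut_cyclic_abelian cycA)) => ->.
Qed.

Lemma card2_normal_cent G A : #|A| = 2 -> G \subset 'N(A) -> G \subset 'C(A).
Proof.
move=> oA nAG; rewrite -ker_conj_aut ker_trivg_morphim nAG subG1 trivg_card_le1.
have ->: 1%N = #|Aut A| by rewrite card_Aut_cyclic ?prime_cyclic ?oA.
exact/subset_leq_card/Aut_conj_aut.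
Qed.

Lemma nilpotent_cycle_der1_proper X x :
  nilpotent X -> X^`(1) :!=: 1 -> x \in X -> <[x]> <*> X^`(1) \proper X.
Proof.
move=> nilX ntX' Xx; rewrite properE join_subG cycle_subG Xx der_sub andTb.
apply: contra ntX' => sXJ.
have nX'x : <[x]> \subset 'N(X^`(1)) by rewrite cycle_subG (subsetP (der_norm 1 X)).
have defX : X :=: <[x]> * X^`(1).
  by apply/eqP; rewrite -norm_joinEl // eqEsubset sXJ join_subG cycle_subG Xx der_sub.
have defXq : X / X^`(1) = (<[x]> * X^`(1)) / X^`(1) by rewrite -defX.
have cycXq : cyclic (X / X^`(1)) by rewrite defXq quotientMidr quotient_cyclic ?cycle_cyclic.
by apply/eqP/derG1P/cyclic_abelian/(cyclic_nilpotent_quo_der1_cyclic nilX).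
Qed.

Lemma odd_pgroup_cyclic_of_card_p M A p :
  prime p -> p.-group M -> odd #|M| -> #|A| = p ->
  {in M, forall b, #[b] = p -> b \in A} -> cyclic M.
Proof.
move=> p_pr pM oddM oA ordpA; rewrite (odd_pgroup_rank1_cyclic pM oddM) leqNgt.
apply/p_rank_geP => -[E Ep2]; have [sEM abelE _] := pnElemP Ep2.
have sEA : E \subset A.
  apply/subsetP=> e Ee; have [-> | nte] := eqVneq e 1; first exact: group1.
  by apply: ordpA (abelem_order_p abelE Ee nte); apply: (subsetP sEM).
have := subset_leq_card sEA; rewrite (card_pnElem Ep2) oA.
by rewrite leqNgt -{1}(expn1 p) ltn_exp2l ?prime_gt1.
Qed.

Lemma Hall_central_der1_trivI M A :
  Hall M A -> A <| M -> M \subset 'C(A) -> A :&: M^`(1) = 1.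
Proof.
move=> hallA nsAM cAM.
have [K /complP[tiAK defM]] := splitsP (SchurZassenhaus_split hallA nsAM).
have sKM : K \subset M by rewrite -defM mulG_subr.
have nKM : M \subset 'N(K).
  by rewrite -defM mul_subG ?normG // cents_norm // centsC (subset_trans sKM cAM).
have abA : abelian A := subset_trans (normal_sub nsAM) cAM.
have abMK : abelian (M / K) by rewrite -defM quotientMidr quotient_abelian.
have sM'K : M^`(1) \subset K := der1_min nKM abMK.
by apply/trivgP; rewrite -tiAK setIS.
Qed.

Lemma Sylow_other_prime M (p : nat) :
  ~~ p.-group M -> exists q, exists2 Q : {group gT}, q.-Sylow(M) Q & Q :!=: 1 /\ q != p.
Proof.
rewrite /pgroup /pnat cardG_gt0 /= => /allPn[q]; rewrite mem_primes cardG_gt0 /=.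
case/andP=> q_pr q_dvd; rewrite inE => neq_qp; have [Q sylQ] := Sylow_exists q M.
exists q, Q => //; split=> //.
by rewrite -cardG_gt1 (card_Hall sylQ) p_part_gt1 mem_primes q_pr cardG_gt0.
Qed.

End NonSelfNormalizing.

Section DerivedSeries.
Variables (gT : finGroupType) (G : {group gT}).

Lemma der_leq i k : i <= k -> G^`(k) \subset G^`(i).
Proof.
move/subnK <-; elim: (k - i) => // t IHt.
by rewrite addSn (subset_trans (der_subS _ _) IHt).
Qed.

Lemma der_leq_nt i k : i <= k -> G^`(k) :!=: 1 -> G^`(i) :!=: 1.
Proof. by move=> le_ik; apply: contraNneq => Gi1; rewrite -subG1 -Gi1 der_leq. Qed.

Lemma solvable_der_inj k i i' :
  solvable G -> G^`(k) :!=: 1 -> i <= k -> i' <= k -> G^`(i) = G^`(i') -> i = i'.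
Proof.
move=> solG ntk le_ik le_i'k eqGi.
wlog lt_ii' : i i' le_ik le_i'k eqGi / i < i'.
  move=> IH; case: (ltngtP i i') => [lt_ii'|lt_i'i|//]; first exact: IH.
  by apply: esym; apply: (IH i' i) => //; rewrite eqGi.
have prGi : G^`(i.+1) \proper G^`(i).
  exact: sol_der1_proper solG (der_sub i G) (der_leq_nt le_ik ntk).
by have := sub_proper_trans (der_leq lt_ii') prGi; rewrite eqGi properxx.
Qed.

Lemma solvable_last_der i :
  solvable G -> G^`(i) :!=: 1 -> exists2 k, i <= k & G^`(k) :!=: 1 /\ G^`(k.+1) = 1.
Proof.
case/derivedP=> N GN1 nti.
have ubN k : G^`(k) :!=: 1 -> k <= N.
  by rewrite leqNgt; apply: contraNN => lt_Nk; rewrite -subG1 -GN1 (der_leq (ltnW lt_Nk)).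
have [k ntk max_k] := ex_maxnP (ex_intro _ i nti) ubN.
exists k; first exact: max_k.
by split=> //; apply/eqP; apply: contraTT (leqnn k) => /max_k; rewrite ltnn.
Qed.

Lemma der_nonselfnorm i :
  solvable G -> 0 < i -> G^`(i) :!=: 1 -> (G^`(i) : {set gT}) \in nonselfnorm_subgroups G.
Proof.
move=> solG i_gt0 nti; have ntG : G :!=: 1 := der_leq_nt (leq0n i) nti.
apply: (mem_nonselfnorm (K := G)); rewrite ?der_sub ?der_norm //.
apply: contraL (sol_der1_proper solG (subxx G) ntG) => sGGi.
by rewrite properE negb_and negbK orbC (subset_trans sGGi) ?der_leq.
Qed.

End DerivedSeries.

Section ThreeDerivedTerms.
Variables (gT : finGroupType) (G L M A : {group gT}).
Hypotheses (solG : solvable G) (nsLG : L <| G) (nsMG : M <| G) (nsAG : A <| G).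
Hypotheses (defM : M :=: L^`(1)) (defA : A :=: M^`(1)) (ntA : A :!=: 1).
Hypotheses (abA : abelian A) (sMG' : M \subset G^`(1)).

(* Once L, M, A are G^(j), G^(j+1), G^(j+2), such an E differs from every
   G^(i) with 0 < i <= j + 2; subgroups of different orders are not conjugate. *)
Definition extra_nonselfnorm (E : {set gT}) :=
  [&& E \in nonselfnorm_subgroups G, E != A, E != M & ~~ (L \subset E)].

Variant extra_nonselfnorm_pair : Prop :=
  ExtraNonselfnormPair (E1 E2 : {set gT}) of
    extra_nonselfnorm E1 & extra_nonselfnorm E2 & #|E1| != #|E2|.

Let sLG : L \subset G := normal_sub nsLG.
Let sMG : M \subset G := normal_sub nsMG.
Let sAG : A \subset G := normal_sub nsAG.
Let sAM : A \subset M. Proof. by rewrite defA der_sub. Qed.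
Let sML : M \subset L. Proof. by rewrite defM der_sub. Qed.
Let ntM : M :!=: 1. Proof. by apply: contraNneq ntA => M1; rewrite -subG1 -M1. Qed.
Let prAM : A \proper M.
Proof. by rewrite defA; apply: sol_der1_proper (solvableS sMG solG) (subxx M) ntM. Qed.
Let prML : M \proper L.
Proof.
have ntL : L :!=: 1 by apply: contraNneq ntM => L1; rewrite -subG1 -L1.
by rewrite defM; apply: sol_der1_proper (solvableS sLG solG) (subxx L) ntL.
Qed.
Let prMG : M \proper G.
Proof.
have ntG : G :!=: 1 by apply: contraNneq ntM => G1; rewrite -subG1 -G1.
exact: sub_proper_trans sMG' (sol_der1_proper solG (subxx G) ntG).
Qed.

Let p := pdiv #|A|.
Let p_pr : prime p. Proof. by rewrite pdiv_prime // cardG_gt1. Qed.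
Let p_dvd_A : p %| #|A|. Proof. exact: pdiv_dvd. Qed.

Lemma extra_not_supA E :
  E \in nonselfnorm_subgroups G -> ~~ (A \subset E) -> extra_nonselfnorm E.
Proof.
move=> nsnE not_sAE; rewrite /extra_nonselfnorm nsnE /=.
apply/and3P; split; first by apply: contraNneq not_sAE => ->.
  by apply: contraNneq not_sAE => ->.
by apply: contra not_sAE; apply: subset_trans (subset_trans sAM sML).
Qed.

Lemma extra_not_supM E :
  E \in nonselfnorm_subgroups G -> E != A -> ~~ (M \subset E) -> extra_nonselfnorm E.
Proof.
move=> nsnE neEA not_sME; rewrite /extra_nonselfnorm nsnE neEA /=.
apply/andP; split; first by apply: contraNneq not_sME => ->.
by apply: contra not_sME; apply: subset_trans sML.
Qed.

Lemma not_sub_pgroup_other (X : {group gT}) (q : nat) :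
  q.-group X -> q != p -> ~~ (A \subset X).
Proof.
move=> qX neq_qp; apply/negP => sAX.
by have := pgroupP (pgroupS sAX qX) p p_pr p_dvd_A; rewrite inE eq_sym (negPf neq_qp).
Qed.

Lemma extra_between : p.-group M ->
  exists H : {group gT}, [/\ extra_nonselfnorm H, A \proper H & H \proper M].
Proof.
move=> pM; have [_ [x Mx not_Ax]] := properP prAM.
have prHM : <[x]> <*> A \proper M.
  by rewrite defA; apply: nilpotent_cycle_der1_proper (pgroup_nil pM) _ Mx; rewrite -defA.
have xH : x \in <[x]> <*> A by rewrite mem_gen // inE cycle_id.
have sAH : A \subset <[x]> <*> A := joing_subr _ _.
exists (<[x]> <*> A)%G; split; last by [].
  apply: extra_not_supM; first apply: nilpotent_proper_nonselfnorm (pgroup_nil pM) sMG prHM _.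
  - by apply: contraNneq ntA => H1; rewrite -subG1 -H1.
  - by apply: contraNneq not_Ax => <-.
  - by rewrite properE in prHM; case/andP: prHM.
by rewrite properE sAH; apply: contra not_Ax => /subsetP->.
Qed.

Lemma extra_Sylow_other : ~~ p.-group M -> exists2 Q : {group gT},
  extra_nonselfnorm Q & forall X : {group gT}, p.-group X -> #|Q| != #|X|.
Proof.
case/Sylow_other_prime=> q [Q sylQ [ntQ neq_qp]]; have qQ := pHall_pgroup sylQ.
exists Q => [|X pX]; last exact: pgroup_card_neq qQ pX ntQ neq_qp.
apply: extra_not_supA; first exact: Sylow_normal_nonselfnorm nsMG prMG sylQ ntQ.
exact: not_sub_pgroup_other qQ neq_qp.
Qed.

Let p_group_cycle (x : gT) : #[x] = p -> p.-group <[x]>.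
Proof. by move=> ox; rewrite /pgroup -orderE ox pnat_id. Qed.

Lemma extra_pair_card_neq_pdiv : #|A| != p -> extra_nonselfnorm_pair.
Proof.
move=> neq_Ap; have [a Aa oa] := Cauchy p_pr p_dvd_A.
have sBA : <[a]> \subset A by rewrite cycle_subG.
have not_sAB : ~~ (A \subset <[a]>).
  apply: contra neq_Ap => sAB.
  by rewrite -oa orderE eqn_leq (subset_leq_card sAB) (subset_leq_card sBA).
have extraB : extra_nonselfnorm <[a]>.
  apply: (extra_not_supA _ not_sAB); apply: (mem_nonselfnorm (K := A)) => //.
  - exact: subset_trans sBA sAG.
  - by rewrite -cardG_gt1 -orderE oa prime_gt1.
  - by rewrite cents_norm // centsC (subset_trans sBA abA).
have [pM | not_pM] := boolP (p.-group M).
  have [H [extraH prAH _]] := extra_between pM.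
  apply: (ExtraNonselfnormPair extraB extraH); rewrite -orderE oa neq_ltn; apply/orP; left.
  by apply: ltn_trans (proper_card prAH); rewrite ltn_neqAle eq_sym neq_Ap dvdn_leq.
have [Q extraQ neqQ] := extra_Sylow_other not_pM.
by apply: (ExtraNonselfnormPair extraQ extraB); apply: neqQ (p_group_cycle oa).
Qed.

Let cAM : #|A| = p -> M \subset 'C(A).
Proof.
move=> oA; apply: subset_trans sMG' (cyclic_normal_der1_cent (normal_norm nsAG) _).
by rewrite prime_cyclic ?oA.
Qed.

Lemma extra_pair_card_pdiv_not_pgroup : #|A| = p -> ~~ p.-group M -> extra_nonselfnorm_pair.
Proof.
move=> oA not_pM; have [Q extraQ neqQ] := extra_Sylow_other not_pM.
have [P sylP] := Sylow_exists p M; have pP := pHall_pgroup sylP.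
have ntP : P :!=: 1.
  rewrite -cardG_gt1 (card_Hall sylP) p_part_gt1 mem_primes p_pr cardG_gt0.
  exact: dvdn_trans p_dvd_A (cardSg sAM).
have neq_PA : P :!=: A.
  apply: contraNneq ntA => eqPA; have nsAM : A <| M by rewrite defA der_normal.
  have hallA : Hall M A by rewrite -eqPA (pHall_Hall sylP).
  by have := Hall_central_der1_trivI hallA nsAM (cAM oA); rewrite -defA setIid => ->.
have extraP : extra_nonselfnorm P.
  apply: extra_not_supM neq_PA _; first exact: Sylow_normal_nonselfnorm nsMG prMG sylP ntP.
  by apply: contra not_pM => /pgroupS; apply.
exact: (ExtraNonselfnormPair extraQ extraP (neqQ _ pP)).
Qed.

Lemma extra_pair_card2 : #|A| = 2 -> 2.-group M -> extra_nonselfnorm_pair.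
Proof.
move=> oA pM; have p2 : p = 2 by rewrite /p oA.
have [H [extraH _ prHM]] : exists H : {group gT},
    [/\ extra_nonselfnorm H, A \proper H & H \proper M].
  by apply: extra_between; rewrite p2.
have [pL | not_pL] := boolP (2.-group L).
  have [_ [y Ly not_My]] := properP prML.
  have prEL : <[y]> <*> M \proper L.
    by rewrite defM; apply: nilpotent_cycle_der1_proper (pgroup_nil pL) _ Ly; rewrite -defM.
  have sME : M \subset <[y]> <*> M := joing_subr _ _.
  have yE : y \in <[y]> <*> M by rewrite mem_gen // inE cycle_id.
  have extraE : extra_nonselfnorm (<[y]> <*> M).
    apply/and4P; split.
    - apply: nilpotent_proper_nonselfnorm (pgroup_nil pL) sLG prEL _.
      by apply: contraNneq ntM => E1; rewrite -subG1 -E1.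
    - by apply: contraNneq not_My => eqEA; rewrite (subsetP sAM) // -eqEA.
    - by apply: contraNneq not_My => <-.
    - by rewrite properE in prEL; case/andP: prEL.
  apply: (ExtraNonselfnormPair extraH extraE).
  by rewrite neq_ltn (leq_trans (proper_card prHM) (subset_leq_card sME)).
have [r [R sylR [ntR neq_r2]]] := Sylow_other_prime not_pL; have rR := pHall_pgroup sylR.
have not_sAR : ~~ (A \subset R) by apply: not_sub_pgroup_other rR _; rewrite p2.
have cAR : R \subset 'C(A).
  apply: subset_trans (card2_normal_cent oA (normal_norm nsAG)).
  exact: subset_trans (pHall_sub sylR) sLG.
have extraR : extra_nonselfnorm R.
  apply: (extra_not_supA _ not_sAR); apply: (mem_nonselfnorm (K := A)) => //.
  - exact: subset_trans (pHall_sub sylR) sLG.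
  - by rewrite cents_norm // centsC.
apply: (ExtraNonselfnormPair extraR extraH).
exact: pgroup_card_neq rR (pgroupS (proper_sub prHM) pM) ntR neq_r2.
Qed.

Lemma extra_pair_card_pdiv_pgroup : #|A| = p -> p.-group M -> extra_nonselfnorm_pair.
Proof.
move=> oA pM; have [H [extraH prAH _]] := extra_between pM.
case: (boolP [exists b in M, (#[b] == p) && (b \notin A)]) => [|no_b].
  case/exists_inP=> b Mb /andP[/eqP ob not_Ab].
  have not_sAB : ~~ (A \subset <[b]>).
    apply: contra not_Ab => sAB; suff /eqP-> : A :==: <[b]> by apply: cycle_id.
    by rewrite eqEcard sAB -orderE ob oA leqnn.
  have prBM : <[b]> \proper M.
    by rewrite properE cycle_subG Mb; apply: contra not_sAB; apply: subset_trans sAM.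
  have extraB : extra_nonselfnorm <[b]>.
    apply: (extra_not_supA _ not_sAB).
    apply: nilpotent_proper_nonselfnorm (pgroup_nil pM) sMG prBM _.
    by rewrite -cardG_gt1 -orderE ob prime_gt1.
  apply: (ExtraNonselfnormPair extraB extraH).
  by rewrite -orderE ob -oA neq_ltn proper_card.
have ordpA : {in M, forall b, #[b] = p -> b \in A}.
  move=> b Mb ob; apply: contraR no_b => not_Ab.
  by apply/exists_inP; exists b; rewrite ?ob ?eqxx.
have [p2 | p_odd] := eqVneq p 2; first by apply: extra_pair_card2; rewrite -p2.
have oddM : odd #|M|.
  apply: contraR p_odd; rewrite -dvdn2 => dvd2M.
  by have := pgroupP pM 2 isT dvd2M; rewrite inE eq_sym.
have cycM := odd_pgroup_cyclic_of_card_p p_pr pM oddM oA ordpA.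
by move/derG1P: (cyclic_abelian cycM); rewrite -defA => A1; move: ntA; rewrite A1 eqxx.
Qed.

Lemma extra_nonselfnorm_pair_exists : extra_nonselfnorm_pair.
Proof.
have [oA | neq_Ap] := eqVneq #|A| p; last exact: extra_pair_card_neq_pdiv.
have [pM | not_pM] := boolP (p.-group M); first exact: extra_pair_card_pdiv_pgroup.
exact: extra_pair_card_pdiv_not_pgroup.
Qed.

End ThreeDerivedTerms.

Lemma Dcount_ge_der (gT : finGroupType) (G : {group gT}) j :
  solvable G -> G^`(j.+2) :!=: 1 -> G^`(j.+3) = 1 -> j.+4 <= Dcount G.
Proof.
move=> solG ntA A'1.
have [E1 E2 extra1 extra2 neq12] := extra_nonselfnorm_pair_exists solG
  (der_normal j G) (der_normal j.+1 G) (der_normal j.+2 G) (erefl _) (erefl _) ntA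
  (introT derG1P A'1) (der_leq G (ltn0Sn j)).
pose S := [set G^`(i.+1) :^: G | i : 'I_j.+2].
have cardS : #|S| = j.+2.
  rewrite card_imset ?card_ord // => i i' /(classes_eq_normal (der_norm _ _)) eqGi.
  by apply/val_inj/succn_inj/(solvable_der_inj solG ntA); rewrite ?ltn_ord.
have notinS E : extra_nonselfnorm G (G^`(j)) (G^`(j.+1)) (G^`(j.+2)) E -> E :^: G \notin S.
  case/and4P=> _ neEA neEM not_sLE; apply/imsetP=> -[i _].
  move/(classes_eq_normal (der_norm _ _)) => defE.
  have: [|| i.+1 <= j, i.+1 == j.+1 | i.+1 == j.+2] by have := ltn_ord i; lia.
  case/or3P=> [le_ij | /eqP eq_ij | /eqP eq_ij]; rewrite ?eq_ij in defE.
  - by rewrite defE der_leq in not_sLE.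
  - by rewrite defE eqxx in neEM.
  - by rewrite defE eqxx in neEA.
have nsnS : S \subset [set H :^: G | H in nonselfnorm_subgroups G].
  apply/subsetP=> _ /imsetP[i _ ->]; apply: imset_f; apply: der_nonselfnorm solG _ _ => //.
  by apply: der_leq_nt ntA; rewrite ltn_ord.
have sub : E1 :^: G |: (E2 :^: G |: S) \subset [set H :^: G | H in nonselfnorm_subgroups G].
  case/and4P: extra1 => nsn1 _ _ _; case/and4P: extra2 => nsn2 _ _ _.
  by rewrite !subUset nsnS !sub1set !(imset_f (fun H => H :^: G)).
rewrite /Dcount; apply: leq_trans (subset_leq_card sub).
have neq_cls : E1 :^: G != E2 :^: G by apply: contra neq12 => /eqP/classes_eq_card ->.
rewrite !cardsU1 cardS !inE (negPf (notinS _ extra1)) (negPf (notinS _ extra2)).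
by rewrite orbF neq_cls.
Qed.

Theorem mainTheorem17 (gT : finGroupType) (G : {group gT}) (n : nat) :
  solvable G -> (3 <= n)%N -> Dcount G = n -> G^`(n.-1) = 1.
Proof.
move=> solG n_ge3 Dn; apply/eqP; apply: contraT => ntG.
have [k le_k [ntk Gk1]] := solvable_last_der solG ntG.
have [j def_k] : exists j, k = j.+2 by exists k.-2; lia.
rewrite def_k in ntk Gk1 le_k.
by have := Dcount_ge_der solG ntk Gk1; rewrite Dn; lia.
Qed.
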